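(* Let $G=([n],E)$ be a graph and let $\pi\in S_n$ be a semi-proper permutation model of $G$. Then $\pi$ is a proper permutation model of $G$ if and only if, for every $i\in[n]$, $$ i + d^+(i) = \pi(i) + d^-(i).$$
   Context: $[n]=\{0,\dots,n-1\}$ and $S_n$ is the set of permutations of $[n]$. For $\pi\in S_n$, a pair $i,j\in[n]$ is a $\pi$-inversion if $(i-j)(\pi(i)-\pi(j))<0$. For a graph $G=([n],E)$, $\pi\in S_n$ is a proper permutation model of $G$ if for all $i,j$: $\{i,j\}\in E$ iff $i,j$ is a $\pi$-inversion; it is a semi-proper permutation model if every edge $\{i,j\}\in E$ is a $\pi$-inversion. $N^+(i)=\{j\in N(i): j>i\}$, $N^-(i)=\{j\in N(i): j<i\}$, $d^+(i)=|N^+(i)|$, $d^-(i)=|N^-(i)|$ (here $N(i)$ is the neighborhood of $i$ in the undirected graph $G$). *)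

From mathcomp Require Import all_boot all_order all_fingroup.
Set Implicit Arguments. Unset Strict Implicit. Unset Printing Implicit Defensive.

Definition simple_graph (n : nat) (E : rel 'I_n) : Prop :=
  irreflexive E /\ symmetric E.

Definition inversion (n : nat) (pi : 'S_n) (i j : 'I_n) : bool :=
  ((i < j) && (pi j < pi i)) || ((j < i) && (pi i < pi j)).

Definition proper_model (n : nat) (E : rel 'I_n) (pi : 'S_n) : Prop :=
  forall i j : 'I_n, E i j = inversion pi i j.

Definition semi_proper_model (n : nat) (E : rel 'I_n) (pi : 'S_n) : Prop :=
  forall i j : 'I_n, E i j -> inversion pi i j.

Definition dplus (n : nat) (E : rel 'I_n) (i : 'I_n) : nat :=
  #|[set j : 'I_n | E i j && (i < j)]|.
Definition dminus (n : nat) (E : rel 'I_n) (i : 'I_n) : nat :=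
  #|[set j : 'I_n | E i j && (j < i)]|.

From mathcomp Require Import all_boot all_order all_fingroup.
From mathcomp Require Import zify.

Set Implicit Arguments.
Unset Strict Implicit.
Unset Printing Implicit Defensive.

(* The vertices j < i split into those with pi j < pi i and those inverted
   with i; the vertices with pi j < pi i split into the same first class and
   those j > i inverted with i.  The two classes have i and pi i elements, so
   i + #(right inversions) = pi i + #(left inversions) for every permutation.
   A semi-proper model has N^+(i) and N^-(i) inside the right and left
   inversions of i, so the degree identity says exactly that these inclusions
   are equalities; by induction on i, once every left inversion of i is an
   edge, the identity forces every right inversion of i to be one too. *)

Lemma card_ord_lt (n m : nat) : m <= n -> #|[set j : 'I_n | j < m]| = m.
Proof.
move=> le_mn.
have -> : [set j : 'I_n | j < m] = widen_ord le_mn @: [set: 'I_m].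
  apply/setP => j; rewrite inE; apply/idP/imsetP => [lt_jm | [k _ ->]].
    by exists (Ordinal lt_jm); rewrite ?inE //; apply: val_inj.
  by rewrite /= ltn_ord.
rewrite card_imset ?cardsT ?card_ord //.
by move=> a b /(congr1 val) /= /val_inj.
Qed.

Section Inversions.
Variables (n : nat) (pi : 'S_n).

Definition right_inversions (i : 'I_n) : {set 'I_n} :=
  [set j : 'I_n | (i < j) && (pi j < pi i)].
Definition left_inversions (i : 'I_n) : {set 'I_n} :=
  [set j : 'I_n | (j < i) && (pi i < pi j)].
Definition left_noninversions (i : 'I_n) : {set 'I_n} :=
  [set j : 'I_n | (j < i) && (pi j < pi i)].

Lemma card_below (i : 'I_n) :
  #|[set j : 'I_n | j < i]| = #|left_noninversions i| + #|left_inversions i|.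
Proof.
rewrite -cardsUI.
have -> : left_noninversions i :&: left_inversions i = set0.
  apply/setP => j; rewrite !inE; apply/negbTE.
  by apply/negP => /andP[/andP[_ lt1] /andP[_ /(ltn_trans lt1)]]; rewrite ltnn.
rewrite cards0 addn0; apply: eq_card => j; rewrite !inE.
have [lt_ji|] //= := ltnP j i.
have : pi j != pi i by apply: contraTneq lt_ji => /perm_inj ->; rewrite ltnn.
by rewrite -val_eqE /= neq_ltn => /orP[] ->; rewrite ?orbT.
Qed.

Lemma card_below_image (i : 'I_n) :
  #|[set j : 'I_n | pi j < pi i]| = #|left_noninversions i| + #|right_inversions i|.
Proof.
rewrite -cardsUI.
have -> : left_noninversions i :&: right_inversions i = set0.
  apply/setP => j; rewrite !inE; apply/negbTE.
  by apply/negP => /andP[/andP[lt1 _] /andP[/(ltn_trans lt1) + _]]; rewrite ltnn.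
rewrite cards0 addn0; apply: eq_card => j; rewrite !inE.
have [lt_ji|] := ltnP (pi j) (pi i); rewrite ?andbF ?andbT //.
have : j != i by apply: contraTneq lt_ji => ->; rewrite ltnn.
by rewrite -val_eqE /= neq_ltn => /orP[] ->; rewrite ?orbT.
Qed.

Lemma inversions_balance (i : 'I_n) :
  i + #|right_inversions i| = pi i + #|left_inversions i|.
Proof.
have card_image : #|[set j : 'I_n | pi j < pi i]| = pi i.
  rewrite -[RHS](card_ord_lt (ltnW (ltn_ord (pi i)))).
  rewrite -(card_preimset [set k : 'I_n | k < pi i] (@perm_inj _ pi)).
  by apply: eq_card => j; rewrite !inE.
rewrite -[in LHS](card_ord_lt (ltnW (ltn_ord i))) -card_image.
by rewrite card_below card_below_image; lia.
Qed.

Lemma inversionE (i j : 'I_n) :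
  inversion pi i j = (j \in right_inversions i) || (j \in left_inversions i).
Proof. by rewrite !inE. Qed.

Lemma inversion_right_or_left (i j : 'I_n) :
  inversion pi i j -> (j \in right_inversions i) || (i \in right_inversions j).
Proof. by rewrite !inE /inversion => /orP[] ->; rewrite ?orbT. Qed.

End Inversions.

Section SemiProperModel.
Variables (n : nat) (E : rel 'I_n) (pi : 'S_n).
Hypotheses (symE : symmetric E) (semiE : semi_proper_model E pi).

Definition upper_nbhd (i : 'I_n) : {set 'I_n} := [set j : 'I_n | E i j && (i < j)].
Definition lower_nbhd (i : 'I_n) : {set 'I_n} := [set j : 'I_n | E i j && (j < i)].

Lemma dplusE (i : 'I_n) : dplus E i = #|upper_nbhd i|. Proof. by []. Qed.
Lemma dminusE (i : 'I_n) : dminus E i = #|lower_nbhd i|. Proof. by []. Qed.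

Lemma upper_nbhd_sub (i : 'I_n) : upper_nbhd i \subset right_inversions pi i.
Proof.
apply/subsetP => j; rewrite inE => /andP[/semiE]; rewrite inversionE !inE.
by move=> /orP[/andP[]|/andP[lt_ji _] lt_ij] //; move: (ltn_trans lt_ij lt_ji); rewrite ltnn.
Qed.

Lemma lower_nbhd_sub (i : 'I_n) : lower_nbhd i \subset left_inversions pi i.
Proof.
apply/subsetP => j; rewrite inE => /andP[/semiE]; rewrite inversionE !inE.
by move=> /orP[/andP[lt_ij _]|/andP[]] // lt_ji; move: (ltn_trans lt_ij lt_ji); rewrite ltnn.
Qed.

Lemma proper_model_nbhdE (i : 'I_n) : proper_model E pi ->
  upper_nbhd i = right_inversions pi i /\ lower_nbhd i = left_inversions pi i.
Proof.
move=> properE; split; apply/setP => j; rewrite !inE properE /inversion;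
  by case: ltngtP; rewrite ?andbT ?andbF ?orbF.
Qed.

Hypothesis balanceE : forall i : 'I_n, i + dplus E i = pi i + dminus E i.

Lemma upper_nbhdE_of_lower (i : 'I_n) : lower_nbhd i = left_inversions pi i ->
  upper_nbhd i = right_inversions pi i.
Proof.
move=> lowerE; apply/eqP; rewrite eqEcard upper_nbhd_sub /=.
move: (balanceE i) (inversions_balance pi i).
by rewrite dplusE dminusE lowerE => balance_i; rewrite -balance_i => /addnI/eq_leq.
Qed.

Lemma upper_nbhdE (i : 'I_n) : upper_nbhd i = right_inversions pi i.
Proof.
elim/ltn_ind: (val i) {-2}i (erefl (val i)) => k IH {}i def_k.
apply: upper_nbhdE_of_lower; apply/eqP; rewrite eqEsubset lower_nbhd_sub /=.
apply/subsetP => j; rewrite !inE => /andP[lt_ji lt_pi].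
have : i \in upper_nbhd j by rewrite (IH j) -?def_k // inE lt_ji lt_pi.
by rewrite inE => /andP[E_ji _]; rewrite symE E_ji lt_ji.
Qed.

End SemiProperModel.

Theorem lemma1 (n : nat) (E : rel 'I_n) (pi : 'S_n) :
  simple_graph E -> semi_proper_model E pi ->
  (proper_model E pi <->
   forall i : 'I_n, (i : nat) + dplus E i = (pi i : nat) + dminus E i).
Proof.
move=> [_ symE] semiE; split=> [properE i | balanceE i j].
  have [upperE lowerE] := proper_model_nbhdE i properE.
  by rewrite dplusE dminusE upperE lowerE inversions_balance.
have upperE := upper_nbhdE symE semiE balanceE.
apply/idP/idP => [/semiE // | /inversion_right_or_left].
by rewrite -!upperE !inE symE => /orP[] /andP[].
Qed.
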